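(* Let $P$ be a positive event pattern. Let $I_1, I_2$ be any two event streams, let $tr_1$ be an event trend matched by $P$ in $I_1$ and let $tr_2$ be an event trend matched by $P$ in $I_2$. Then the type of the first event of $tr_1$ equals the type of the first event of $tr_2$, and the type of the last event of $tr_1$ equals the type of the last event of $tr_2$.
   Context: Events: each event $e$ has an event type $e.type$ (from a fixed set of event types) and an occurrence time $e.time \in \mathbb{Q}_{\ge 0}$. An event stream $I$ is a finite collection of distinct events arriving in nondecreasing order of time. Positive patterns are defined recursively: an event type $E$ is a pattern; if $P_i, P_j$ are patterns then $P_i+$ (Kleene plus) and $\mathsf{SEQ}(P_i,P_j)$ (event sequence) are patterns. (Standing assumption: each event type occurs at most once in a pattern.) The set $matches(P)$ of finite sequences of events of $I$ matched by $P$ is defined recursively: (i) $matches(E)$ consists of the one-element sequences $(e)$ with $e \in I$, $e.type = E$; (ii) $s=(e_1,\dots,e_k) \in matches(\mathsf{SEQ}(P_i,P_j))$ iff there is $m$ with $1 \le m \le k$ such that $(e_1,\dots,e_m) \in matches(P_i)$, $(e_{m+1},\dots,e_k) \in matches(P_j)$, and $e_l.time < e_{l+1}.time$ for all $1 \le l < k$; (iii) $tr \in matches(P_i+)$ iff $tr$ is the concatenation $s_1 s_2 \cdots s_k$ of sequences $s_1,\dots,s_k$ ($k \ge 1$), each $s_l \in matches(P_i)$, such that the time of the last event of $s_l$ is strictly less than the time of the first event of $s_{l+1}$. An event trend matched by $P$ in $I$ is an element of $matches(P)$ computed over $I$. *)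

From mathcomp Require Import all_boot all_order all_algebra.
Set Implicit Arguments. Unset Strict Implicit. Unset Printing Implicit Defensive.
Import Order.TTheory GRing.Theory Num.Theory.
Local Open Scope ring_scope.

Inductive pattern (ET : Type) : Type :=
| PType : ET -> pattern ET
| PPlus : pattern ET -> pattern ET
| PSeq  : pattern ET -> pattern ET -> pattern ET.

Fixpoint ptypes (ET : Type) (P : pattern ET) : seq ET :=
  match P with
  | PType E => [:: E]
  | PPlus P1 => ptypes P1
  | PSeq P1 P2 => ptypes P1 ++ ptypes P2
  end.

Definition wf_pattern (ET : eqType) (P : pattern ET) : bool := uniq (ptypes P).

Definition is_stream (Ev : eqType) (etime : Ev -> rat) (I : seq Ev) : Prop :=
  [/\ uniq I, sorted (fun a b => etime a <= etime b) I
    & all (fun e => 0 <= etime e) I].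

Section Matches.
Variables (ET : Type) (Ev : eqType) (etype : Ev -> ET) (etime : Ev -> rat).
Variable I : seq Ev.

Inductive matches : pattern ET -> seq Ev -> Prop :=
| m_type : forall (E : ET) (e : Ev),
    e \in I -> etype e = E -> matches (PType E) [:: e]
| m_seq : forall (P1 P2 : pattern ET) (s1 s2 : seq Ev),
    s1 != [::] ->
    matches P1 s1 -> matches P2 s2 ->
    sorted (fun a b => etime a < etime b) (s1 ++ s2) ->
    matches (PSeq P1 P2) (s1 ++ s2)
| m_plus_one : forall (P1 : pattern ET) (s : seq Ev),
    matches P1 s -> matches (PPlus P1) s
| m_plus_cons : forall (P1 : pattern ET) (s t : seq Ev) (x y : Ev),
    (* s_1 = rcons s x in matches(P1), s_2 ... s_k = y :: t in matches(P1+);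
       the last event x of s_1 is strictly before the first event y of s_2 *)
    matches P1 (rcons s x) -> matches (PPlus P1) (y :: t) ->
    etime x < etime y ->
    matches (PPlus P1) (rcons s x ++ y :: t).
End Matches.

From mathcomp Require Import all_boot all_order all_algebra.
Set Implicit Arguments. Unset Strict Implicit. Unset Printing Implicit Defensive.

(* Every trend matched by [P] starts with an event of type [pattern_first P]
   and ends with one of type [pattern_last P]: both are read off the syntax of
   [P], by induction on the derivation of the match.  Hence the claim holds
   for arbitrary streams. *)

Fixpoint pattern_first (ET : Type) (P : pattern ET) : ET :=
  match P with
  | PType E => E
  | PPlus P1 => pattern_first P1
  | PSeq P1 _ => pattern_first P1
  end.

Fixpoint pattern_last (ET : Type) (P : pattern ET) : ET :=
  match P with
  | PType E => E
  | PPlus P1 => pattern_last P1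
  | PSeq _ P2 => pattern_last P2
  end.

Lemma ohead_cat (T : Type) (s1 s2 : seq T) :
  0 < size s1 -> ohead (s1 ++ s2) = ohead s1.
Proof. by case: s1. Qed.

Lemma ohead_rev_cat (T : Type) (s1 s2 : seq T) :
  0 < size s2 -> ohead (rev (s1 ++ s2)) = ohead (rev s2).
Proof. by rewrite rev_cat; case/lastP: s2 => // s x _; rewrite rev_rcons. Qed.

Section MatchEndpoints.

Variables (ET : Type) (Ev : eqType) (etype : Ev -> ET) (etime : Ev -> rat).
Variable I : seq Ev.

Lemma matches_size_gt0 (P : pattern ET) (s : seq Ev) :
  matches etype etime I P s -> 0 < size s.
Proof.
elim=> // [P1 P2 s1 s2 _ _ s1_gt0 _ _ _ | P1 s1 s2 x y _ _ _ _ _].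
  by rewrite size_cat addn_gt0 s1_gt0.
by rewrite size_cat size_rcons.
Qed.

Lemma matches_first_type (P : pattern ET) (s : seq Ev) :
  matches etype etime I P s -> omap etype (ohead s) = Some (pattern_first P).
Proof.
elim=> {P s} [E e _ <- // | P1 P2 s1 s2 _ m1 IH1 _ _ _ | // |].
  by rewrite ohead_cat ?(matches_size_gt0 m1).
by move=> P1 s t x y _ IH1 _ _ _; rewrite ohead_cat ?size_rcons.
Qed.

Lemma matches_last_type (P : pattern ET) (s : seq Ev) :
  matches etype etime I P s -> omap etype (ohead (rev s)) = Some (pattern_last P).
Proof.
elim=> {P s} [E e _ <- // | P1 P2 s1 s2 _ _ _ m2 IH2 _ | // |].
  by rewrite ohead_rev_cat ?(matches_size_gt0 m2).
by move=> P1 s t x y _ _ _ IH2 _; rewrite ohead_rev_cat.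
Qed.

End MatchEndpoints.

Theorem theorem1 (ET : eqType) (Ev : eqType) (etype : Ev -> ET)
    (etime : Ev -> rat) (P : pattern ET) (I1 I2 : seq Ev) (tr1 tr2 : seq Ev) :
  wf_pattern P ->
  is_stream etime I1 -> is_stream etime I2 ->
  matches etype etime I1 P tr1 -> matches etype etime I2 P tr2 ->
  omap etype (ohead tr1) = omap etype (ohead tr2) /\
  omap etype (ohead (rev tr1)) = omap etype (ohead (rev tr2)).
Proof.
move=> _ _ _ m1 m2.
by rewrite !(matches_first_type m1, matches_first_type m2)
           !(matches_last_type m1, matches_last_type m2).
Qed.
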